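(* Let $\Sigma$ be a finite alphabet. For every finite language $S \subseteq \Sigma^*$, the string decomposition cost equals the optimal alignment cost: $c_d(S) = c(S)$.
   Context: String decomposition cost: given strings $w_1,\dots,w_n$ (the elements of $S$), a decomposition consists of strings $x_1,\dots,x_m$ and, for each $i$, an integer $l_i \ge 0$ and a strictly increasing function $p_i:\{1,\dots,l_i\}\to\{1,\dots,m\}$ with $w_i = x_{p_i(1)}x_{p_i(2)}\cdots x_{p_i(l_i)}$. The cost of the decomposition is $\sum_{k=1}^m |x_k|$, and $c_d(w_1,\dots,w_n)=c_d(S)$ is the minimum cost over all decompositions. Alignment cost: an alignment tuple is an element $(u_1,\dots,u_n) \in (\Sigma\cup\{\lambda\})^n \setminus \{\lambda\}^n$ ($\lambda$ the empty string) whose non-$\lambda$ entries are all equal to a single symbol $\sigma\in\Sigma$; an alignment of $w_1,\dots,w_n$ is a sequence $t_1\cdots t_m$ of alignment tuples such that for each $i$ the concatenation of the $i$-th components of $t_1,\dots,t_m$ equals $w_i$; its cost is $m$, and $c(S)$ is the minimum alignment cost. *)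

From mathcomp Require Import all_boot.
From Stdlib Require Import ClassicalEpsilon.
Set Implicit Arguments. Unset Strict Implicit. Unset Printing Implicit Defensive.

(* The least natural number satisfying P (defined classically; any value if
   no least element exists, which never happens for the costs below). *)
Definition min_nat (P : nat -> Prop) : nat :=
  epsilon (inhabits 0) (fun n => P n /\ forall k, P k -> n <= k).

Section Costs.
Variable Sigma : finType.

(* A language S is given as a duplicate-free list w_0, ..., w_{n-1}. *)

Definition is_decomposition (S xs : seq (seq Sigma)) : Prop :=
  forall i, i < size S ->
    exists p : seq nat,
      [/\ sorted ltn p, all (fun j => j < size xs) p &
          nth [::] S i = flatten (map (nth [::] xs) p)].

Definition decomp_cost (xs : seq (seq Sigma)) : nat := sumn (map size xs).

Definition has_decomp_of_cost (S : seq (seq Sigma)) (k : nat) : Prop :=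
  exists xs, is_decomposition S xs /\ decomp_cost xs = k.

Definition c_d (S : seq (seq Sigma)) : nat := min_nat (has_decomp_of_cost S).

(* Alignment tuples: elements of (Sigma u {lambda})^n \ {lambda}^n, lambda = None,
   whose non-lambda entries all equal a single symbol. *)
Definition is_align_tuple (n : nat) (t : seq (option Sigma)) : Prop :=
  [/\ size t = n, has (fun u => u != None) t &
      exists s : Sigma, all (fun u => (u == None) || (u == Some s)) t].

Definition comp_string (u : option Sigma) : seq Sigma :=
  if u is Some a then [:: a] else [::].

Definition is_alignment (S : seq (seq Sigma)) (ts : seq (seq (option Sigma))) : Prop :=
  (forall t, t \in ts -> is_align_tuple (size S) t) /\
  (forall i, i < size S ->
     flatten (map (fun t => comp_string (nth None t i)) ts) = nth [::] S i).

Definition has_align_of_cost (S : seq (seq Sigma)) (m : nat) : Prop :=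
  exists ts, is_alignment S ts /\ size ts = m.

Definition c_align (S : seq (seq Sigma)) : nat := min_nat (has_align_of_cost S).

End Costs.

(* A decomposition yields an alignment: each string x_k is written out letter
   by letter as columns whose i-th entry is that letter when w_i uses x_k and
   lambda otherwise; the all-lambda columns (strings used by no w_i) are
   discarded, so there are at most sum_k |x_k| columns.  Conversely, each
   column of an alignment is one string of length one, used exactly by the
   rows that are not lambda there. *)

From Stdlib Require Import ClassicalEpsilon Classical.
From mathcomp Require Import all_boot.
Set Implicit Arguments. Unset Strict Implicit. Unset Printing Implicit Defensive.

Lemma min_natP (P : nat -> Prop) : (exists n, P n) ->
  P (min_nat P) /\ forall k, P k -> min_nat P <= k.
Proof.
move=> [n0 Pn0]; rewrite /min_nat.
apply: (epsilon_spec _ (fun n => P n /\ forall k, P k -> n <= k)).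
elim/ltn_ind: n0 Pn0 => n IH Pn.
case: (classic (exists2 k, P k & k < n)) => [[k Pk lt_kn]|no_smaller].
  exact: IH lt_kn Pk.
exists n; split=> // k Pk; rewrite leqNgt; apply/negP => lt_kn.
by apply: no_smaller; exists k.
Qed.

Lemma min_nat_eq (P Q : nat -> Prop) : (exists n, P n) ->
    (forall n, P n -> exists2 m, Q m & m <= n) ->
    (forall m, Q m -> exists2 n, P n & n <= m) ->
  min_nat P = min_nat Q.
Proof.
move=> exP PQ QP; have [Pmin P_ge] := min_natP exP.
have [m Qm le_m] := PQ _ Pmin; have [Qmin Q_ge] := min_natP (ex_intro _ m Qm).
have [n Pn le_n] := QP _ Qmin.
by apply/eqP; rewrite eqn_leq (leq_trans (P_ge _ Pn) le_n) (leq_trans (Q_ge _ Qm) le_m).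
Qed.

Lemma bounded_choice (T : Type) (x0 : T) (n : nat) (Q : nat -> T -> Prop) :
  (forall i, i < n -> exists x, Q i x) -> exists f, forall i, i < n -> Q i (f i).
Proof.
move=> exQ; apply: (choice (fun i x => i < n -> Q i x)) => i.
by case: (ltnP i n) => [/exQ [x Qx] | _]; [exists x | exists x0].
Qed.

Lemma flatten_map_filter (A B : Type) (q : pred A) (f : A -> seq B) (s : seq A) :
  flatten [seq f x | x <- s & q x] = flatten [seq if q x then f x else [::] | x <- s].
Proof. by elim: s => //= x s IH; case: (q x) => /=; rewrite IH. Qed.

Lemma sorted_ltn_filter_iota (p : seq nat) (m : nat) :
  sorted ltn p -> all (fun j => j < m) p -> p = [seq k <- iota 0 m | k \in p].
Proof.
move=> sorted_p lt_p_m; apply: (irr_sorted_eq ltn_trans ltnn) => //.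
  exact: sorted_filter ltn_trans _ _ (iota_ltn_sorted 0 m).
move=> k; rewrite mem_filter mem_iota add0n /=.
by case p_k: (k \in p); rewrite //= (allP lt_p_m k p_k).
Qed.

Section DecompositionAlignment.
Variable Sigma : finType.
Implicit Types (S xs : seq (seq Sigma)) (t : seq (option Sigma)).

Definition index_decomposes S xs (i : nat) (p : seq nat) : Prop :=
  [/\ sorted ltn p, all (fun j => j < size xs) p &
      nth [::] S i = flatten (map (nth [::] xs) p)].

Lemma decomposition_self S : is_decomposition S S.
Proof. by move=> i lt_i_S; exists [:: i]; rewrite /= lt_i_S cats0. Qed.

Definition spelled_row (ts : seq (seq (option Sigma))) (i : nat) : seq Sigma :=
  flatten [seq comp_string (nth None t i) | t <- ts].

Definition nonlambda t : bool := has (fun u => u != None) t.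

Lemma spelled_row_filter_nonlambda ts i :
  spelled_row [seq t <- ts | nonlambda t] i = spelled_row ts i.
Proof.
rewrite /spelled_row flatten_map_filter; congr flatten; apply: eq_map => t.
case: ifP => // /negbT/hasPn t_lambda.
have [lt_i_t|] := ltnP i (size t); last by move/(nth_default None) ->.
by move: (t_lambda _ (mem_nth None lt_i_t)); rewrite negbK => /eqP ->.
Qed.

Section Columns.
Variables (n : nat) (idx : nat -> seq nat) (xs : seq (seq Sigma)).

Definition column (k : nat) (a : Sigma) : seq (option Sigma) :=
  [seq if k \in idx i then Some a else None | i <- iota 0 n].

Definition columns : seq (seq (option Sigma)) :=
  flatten [seq [seq column k a | a <- nth [::] xs k] | k <- iota 0 (size xs)].

Lemma column_align_tuple k a :
  nonlambda (column k a) -> is_align_tuple n (column k a).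
Proof.
move=> nl; split=> //; first by rewrite size_map size_iota.
by exists a; apply/allP => u /mapP [i _ ->]; case: ifP; rewrite /= ?eqxx ?orbT.
Qed.

Lemma spelled_row_columns i : i < n ->
  spelled_row columns i =
  flatten [seq if k \in idx i then nth [::] xs k else [::] | k <- iota 0 (size xs)].
Proof.
move=> lt_i_n; rewrite /spelled_row /columns.
elim: (iota 0 _) => //= k ks IH; rewrite map_cat flatten_cat IH -map_comp.
congr (_ ++ _); rewrite (eq_map (g := fun a => comp_string
  (if k \in idx i then Some a else None))); last first.
  by move=> a /=; rewrite (nth_map 0) ?size_iota // nth_iota.
by case: (k \in idx i); elim: (nth [::] xs k) => //= a s ->.
Qed.

Lemma size_columns : size columns = decomp_cost xs.
Proof.
rewrite size_flatten /shape -map_comp /decomp_cost.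
rewrite -[xs in RHS](mkseq_nth [::] xs) /mkseq -map_comp.
by congr sumn; apply: eq_map => k; rewrite /= size_map.
Qed.

End Columns.

Lemma alignment_of_decomposition S xs : is_decomposition S xs ->
  exists2 ts, is_alignment S ts & size ts <= decomp_cost xs.
Proof.
move=> dec_xs.
have [idx idxP] := bounded_choice [::] (Q := index_decomposes S xs) dec_xs.
exists [seq t <- columns (size S) idx xs | nonlambda t].
  split=> [t|i lt_i_S].
    rewrite mem_filter => /andP [nl /flatten_mapP [k _ /mapP [a _ t_col]]].
    by rewrite t_col in nl *; exact: column_align_tuple.
  have [sorted_idx lt_idx w_i] := idxP i lt_i_S.
  rewrite -[flatten _]/(spelled_row _ i) spelled_row_filter_nonlambda.
  rewrite spelled_row_columns // -flatten_map_filter.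
  by rewrite -(sorted_ltn_filter_iota sorted_idx lt_idx) w_i.
by rewrite -(size_columns (size S) idx) size_filter count_size.
Qed.

Definition column_letter t : seq Sigma := take 1 (pmap id t).

Lemma size_column_letter n t : is_align_tuple n t -> size (column_letter t) = 1.
Proof.
case=> _ /hasP [[a|] // a_t _] _.
have : a \in pmap id t by rewrite mem_pmap map_id.
by rewrite /column_letter; case: (pmap id t) => //= x r _; rewrite take0.
Qed.

Lemma comp_string_align_tuple n t i : is_align_tuple n t ->
  comp_string (nth None t i) =
  if nth None t i != None then column_letter t else [::].
Proof.
case=> _ _ [s /allP only_s]; case t_i: (nth None t i) => [a|] //=.
have lt_i_t : i < size t.
  by rewrite ltnNge; apply/negP => /(nth_default None); rewrite t_i.
have a_t : Some a \in t by rewrite -t_i mem_nth.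
have : a \in pmap id t by rewrite mem_pmap map_id.
rewrite /column_letter; case pmap_t: (pmap id t) => [|x r] //= _.
have x_t : Some x \in t by rewrite -[t]map_id -mem_pmap pmap_t mem_head.
by move: (only_s _ a_t) (only_s _ x_t) => /= /eqP [->] /eqP [->]; rewrite take0.
Qed.

Lemma decomposition_of_alignment S ts : is_alignment S ts ->
  is_decomposition S (map column_letter ts).
Proof.
move=> [tuples rows] i lt_i_S.
exists [seq k <- iota 0 (size ts) | nth None (nth [::] ts k) i != None].
split.
- exact: sorted_filter ltn_trans _ _ (iota_ltn_sorted 0 _).
- by apply/allP => k; rewrite mem_filter mem_iota size_map => /andP [_].
rewrite -rows // (flatten_map_filter _ (nth [::] (map column_letter ts))).
rewrite -{1}(mkseq_nth [::] ts) /mkseq -map_comp.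
congr flatten; apply/eq_in_map => k; rewrite mem_iota add0n => lt_k_ts.
rewrite (nth_map [::]) //=.
by have /comp_string_align_tuple -> := tuples _ (mem_nth [::] lt_k_ts).
Qed.

Lemma decomp_cost_column_letters S ts : is_alignment S ts ->
  decomp_cost (map column_letter ts) = size ts.
Proof.
move=> [tuples _]; rewrite /decomp_cost -map_comp.
rewrite (eq_in_map _ (fun _ => 1) ts).1; last by move=> t /tuples /size_column_letter.
by elim: ts {tuples} => //= t ts ->.
Qed.

End DecompositionAlignment.

Theorem lemma3 (Sigma : finType) (S : seq (seq Sigma)) (HS : uniq S) :
  c_d S = c_align S.
Proof.
apply: min_nat_eq.
- by exists (decomp_cost S), S; split; first exact: decomposition_self.
- move=> _ [xs [dec_xs <-]].
  have [ts ts_align le_ts] := alignment_of_decomposition dec_xs.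
  by exists (size ts) => //; exists ts.
- move=> _ [ts [ts_align <-]].
  exists (size ts) => //; exists (map (@column_letter _) ts); split.
    exact: decomposition_of_alignment ts_align.
  exact: decomp_cost_column_letters ts_align.
Qed.
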